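(* For fixed positive integer $t$, the two-variable function $(n,k)\mapsto\hat L_0(n,k,t)$ (on positive reals with $1<n/k<t$) has partial derivatives \[ \frac{\partial}{\partial k}\hat L_0(n,k,t)=-\frac{n}{k^2}\big(\log n-y_t(n/k)\big)+\frac{n}{k^2}-\frac1k\quad\text{and}\quad \frac{\partial}{\partial n}\hat L_0(n,k,t)=\frac{\log n-y_t(n/k)}{k}. \]
   Context: $d_i=2^{\binom i2}i!$. For positive integer $t$ and real $1<\rho<t$, $y_t(\rho)$ is defined by: $x_t(\rho),y_t(\rho)$ are the unique reals $x,y$ with $\sum_{i=1}^t e^{x+iy}d_i^{-1}=1$ and $\sum_{i=1}^t ie^{x+iy}d_i^{-1}=\rho$. $\tilde L_0(\rho,k,t)=\sup\{\rho\log(\rho k)-\log k-\rho+1-\sum_ip_i\log(p_id_i)\}$, the supremum over $(p_i)_{i=1}^t\in[0,1]^t$ with $\sum_ip_i=1$, $\sum_iip_i=\rho$ (with $0\log0=0$), and $\hat L_0(n,k,t)=\tilde L_0(n/k,k,t)$. Logarithms are natural. *)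

From Stdlib Require Import Reals ClassicalEpsilon.
From Coquelicot Require Import Coquelicot.
Open Scope R_scope.

Definition d (i : nat) : R := 2 ^ (i * (i - 1) / 2)%nat * INR (Factorial.fact i).

Definition sum1t (t : nat) (f : nat -> R) : R :=
  match t with O => 0 | S t' => sum_f_R0 (fun j => f (S j)) t' end.

Definition xy_sol (t : nat) (rho x y : R) : Prop :=
  sum1t t (fun i => exp (x + INR i * y) / d i) = 1 /\
  sum1t t (fun i => INR i * exp (x + INR i * y) / d i) = rho.

Definition y_t (t : nat) (rho : R) : R :=
  epsilon (inhabits 0) (fun y => exists x, xy_sol t rho x y).

Definition plogpd (p di : R) : R :=
  if Req_EM_T p 0 then 0 else p * ln (p * di).

Definition admissible (t : nat) (rho : R) (p : nat -> R) : Prop :=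
  (forall i, (1 <= i <= t)%nat -> 0 <= p i <= 1) /\
  sum1t t p = 1 /\ sum1t t (fun i => INR i * p i) = rho.

Definition Ltilde0_obj (rho k : R) (t : nat) (p : nat -> R) : R :=
  rho * ln (rho * k) - ln k - rho + 1 - sum1t t (fun i => plogpd (p i) (d i)).

Definition Ltilde0 (rho k : R) (t : nat) : R :=
  real (Lub_Rbar (fun v => exists p, admissible t rho p /\ v = Ltilde0_obj rho k t p)).

Definition Lhat0 (n k : R) (t : nat) : R := Ltilde0 (n / k) k t.

(** The pair (x_t(ρ), y_t(ρ)) consists of the Lagrange multipliers of the
    entropy problem defining L̃0.  If Σ_i e^(x+iy)/d_i = 1, Gibbs' inequality
    gives Σ_i p_i log(p_i d_i) ≥ x + ρ y for every admissible p, with equality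
    at p_i = e^(x+iy)/d_i when (x, y) solves the system.  Hence
    L̃0(ρ, k) = ρ log(ρk) - log k - ρ + 1 - Φ(ρ) with Φ(ρ) = x_t(ρ) + ρ y_t(ρ),
    and the same inequality shows that y_t(ρ) is a subgradient of Φ at ρ.
    The mean ρ of the tilted distribution e^(x+iy)/d_i is strictly increasing
    in y, so its inverse y_t is continuous; a function with a continuous
    subgradient is differentiable, so Φ' = y_t, and the chain rule gives both
    partial derivatives. *)

From Stdlib Require Import Reals Lra Lia ClassicalEpsilon.
From Coquelicot Require Import Coquelicot.
Open Scope R_scope.

Lemma sum1t_S m f : sum1t (S m) f = sum1t m f + f (S m).
Proof. destruct m; simpl; [ring | reflexivity]. Qed.

Lemma sum1t_Sl m f : sum1t (S m) f = f 1%nat + sum1t m (fun i => f (S i)).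
Proof.
  induction m as [|m IH]; [simpl; ring|].
  rewrite sum1t_S, IH, (sum1t_S m). ring.
Qed.

Lemma sum1t_ext t f g : (forall i, (1 <= i <= t)%nat -> f i = g i) ->
  sum1t t f = sum1t t g.
Proof.
  induction t as [|t IH]; intros Hfg; [reflexivity|].
  rewrite !sum1t_S, IH, Hfg; [reflexivity | lia | intros; apply Hfg; lia].
Qed.

Lemma sum1t_plus t f g : sum1t t (fun i => f i + g i) = sum1t t f + sum1t t g.
Proof. induction t as [|t IH]; [simpl; ring|]. rewrite !sum1t_S, IH; ring. Qed.

Lemma sum1t_scal t c f : sum1t t (fun i => c * f i) = c * sum1t t f.
Proof. induction t as [|t IH]; [simpl; ring|]. rewrite !sum1t_S, IH; ring. Qed.

Lemma sum1t_const t c : sum1t t (fun _ => c) = INR t * c.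
Proof. induction t as [|t IH]; [simpl; ring|]. rewrite !sum1t_S, IH, S_INR; ring. Qed.

Lemma sum1t_le t f g : (forall i, (1 <= i <= t)%nat -> f i <= g i) ->
  sum1t t f <= sum1t t g.
Proof.
  induction t as [|t IH]; intros Hfg; [simpl; lra|].
  rewrite !sum1t_S. apply Rplus_le_compat; [apply IH; intros|]; apply Hfg; lia.
Qed.

Lemma sum1t_nonneg t f : (forall i, (1 <= i <= t)%nat -> 0 <= f i) -> 0 <= sum1t t f.
Proof.
  intros Hf. replace 0 with (sum1t t (fun _ => 0)) by (rewrite sum1t_const; ring).
  apply sum1t_le; exact Hf.
Qed.

Lemma sum1t_ge_term t f j : (forall i, (1 <= i <= t)%nat -> 0 <= f i) ->
  (1 <= j <= t)%nat -> f j <= sum1t t f.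
Proof.
  induction t as [|t IH]; intros Hf Hj; [lia|].
  rewrite sum1t_S.
  assert (Hlast : 0 <= f (S t)) by (apply Hf; lia).
  destruct (Nat.eq_dec j (S t)) as [->|Hne].
  - assert (0 <= sum1t t f) by (apply sum1t_nonneg; intros; apply Hf; lia). lra.
  - assert (f j <= sum1t t f) by (apply IH; [intros; apply Hf|]; lia). lra.
Qed.

Lemma sum1t_continuity_pt t (f : nat -> R -> R) y :
  (forall i, continuity_pt (f i) y) -> continuity_pt (fun z => sum1t t (fun i => f i z)) y.
Proof.
  intros Hf. induction t as [|t IH].
  - apply continuity_pt_const. intros u v; reflexivity.
  - apply (continuity_pt_ext (fun z => sum1t t (fun i => f i z) + f (S t) z)).
    + intros z; symmetry; apply sum1t_S.
    + apply (continuity_pt_plus (fun z => sum1t t (fun i => f i z)) (f (S t))); auto.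
Qed.

Lemma d_pos i : 0 < d i.
Proof. apply Rmult_lt_0_compat; [apply pow_lt; lra | apply INR_fact_lt_0]. Qed.

Lemma d_ge1 i : 1 <= d i.
Proof.
  unfold d. rewrite <- (Rmult_1_l 1). apply Rmult_le_compat; try lra.
  - apply pow_R1_Rle; lra.
  - apply (le_INR 1). pose proof (Factorial.lt_O_fact i); lia.
Qed.

Lemma d_1 : d 1 = 1.
Proof. unfold d; simpl; ring. Qed.

(** * Gibbs' inequality *)

Definition weight (x y : R) (i : nat) : R := exp (x + INR i * y) / d i.

Lemma weight_pos x y i : 0 < weight x y i.
Proof. apply Rdiv_lt_0_compat; [apply exp_pos | apply d_pos]. Qed.

Lemma xy_solE t rho x y : xy_sol t rho x y <->
  sum1t t (weight x y) = 1 /\ sum1t t (fun i => INR i * weight x y i) = rho.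
Proof.
  unfold xy_sol.
  rewrite (sum1t_ext t (fun i => INR i * exp (x + INR i * y) / d i)
             (fun i => INR i * weight x y i)) by (intros; unfold weight, Rdiv; ring).
  reflexivity.
Qed.

(* [ln u <= u - 1] at [u = weight x y i / p]. *)
Lemma plogpd_ge_tangent p x y i : 0 <= p ->
  p * (x + INR i * y) + p - weight x y i <= plogpd p (d i).
Proof.
  intros Hp. unfold plogpd. destruct (Req_EM_T p 0) as [->|Hp0].
  - pose proof (weight_pos x y i). lra.
  - pose proof (d_pos i) as Hd.
    pose proof (exp_ineq1_le (ln (weight x y i / p))) as Hln.
    rewrite exp_ln in Hln by (apply Rdiv_lt_0_compat; [apply weight_pos | lra]).
    unfold weight in *.
    rewrite !ln_div, ln_exp in Hln by (try apply Rdiv_lt_0_compat; try apply exp_pos; lra).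
    rewrite ln_mult by lra.
    apply Rmult_le_compat_l with (r := p) in Hln; [|lra].
    replace (p * (exp (x + INR i * y) / d i / p)) with (exp (x + INR i * y) / d i) in Hln
      by (field; lra).
    nra.
Qed.

Lemma sum_plogpd_ge t rho p x y : admissible t rho p -> sum1t t (weight x y) = 1 ->
  x + rho * y <= sum1t t (fun i => plogpd (p i) (d i)).
Proof.
  intros [Hp [Hsum Hmean]] Hw.
  apply Rle_trans with (sum1t t (fun i => p i * (x + INR i * y) + p i - weight x y i)).
  - replace (sum1t t (fun i => p i * (x + INR i * y) + p i - weight x y i)) with
      (x * sum1t t p + y * sum1t t (fun i => INR i * p i) + sum1t t p + (-1) * sum1t t (weight x y)).
    + rewrite Hsum, Hmean, Hw. lra.
    + rewrite <- !sum1t_scal, <- !sum1t_plus. apply sum1t_ext; intros; ring.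
  - apply sum1t_le; intros i Hi. apply plogpd_ge_tangent, Hp, Hi.
Qed.

Lemma xy_sol_optimal t rho x y : xy_sol t rho x y ->
  admissible t rho (weight x y) /\
  sum1t t (fun i => plogpd (weight x y i) (d i)) = x + rho * y.
Proof.
  intros Hs. apply xy_solE in Hs as [Hw Hmean].
  split; [split; [|split]|]; auto.
  - intros i Hi. split; [apply Rlt_le, weight_pos|].
    rewrite <- Hw. apply sum1t_ge_term; auto. intros; apply Rlt_le, weight_pos.
  - rewrite (sum1t_ext t _ (fun i => x * weight x y i + y * (INR i * weight x y i))).
    + rewrite sum1t_plus, !sum1t_scal, Hw, Hmean. ring.
    + intros i _. unfold plogpd. destruct (Req_EM_T (weight x y i) 0) as [E|_].
      * pose proof (weight_pos x y i); lra.
      * pose proof (d_pos i).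
        replace (weight x y i * d i) with (exp (x + INR i * y)) by (unfold weight; field; lra).
        rewrite ln_exp; ring.
Qed.

Lemma Ltilde0_xy_sol t rho k x y : xy_sol t rho x y ->
  Ltilde0 rho k t = rho * ln (rho * k) - ln k - rho + 1 - (x + rho * y).
Proof.
  intros Hs. destruct (xy_sol_optimal t rho x y Hs) as [Hadm Hval].
  unfold Ltilde0.
  rewrite (is_lub_Rbar_unique _ (Finite (rho * ln (rho * k) - ln k - rho + 1 - (x + rho * y))));
    [reflexivity|]. split.
  - intros v [p [Hp ->]]. simpl. unfold Ltilde0_obj.
    pose proof (sum_plogpd_ge t rho p x y Hp (proj1 (proj1 (xy_solE _ _ _ _) Hs))). lra.
  - intros b Hb. apply Hb. exists (weight x y). unfold Ltilde0_obj. rewrite Hval. auto.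
Qed.

Lemma xy_sol_support t rho x y rho' x' y' : xy_sol t rho x y -> xy_sol t rho' x' y' ->
  x + rho' * y <= x' + rho' * y'.
Proof.
  intros Hs Hs'. destruct (xy_sol_optimal t rho' x' y' Hs') as [Hadm <-].
  apply sum_plogpd_ge; [exact Hadm | exact (proj1 Hs)].
Qed.

(** * The mean of the tilted distribution *)

Lemma exp_sub_mul_sub_pos a b : a <> b -> 0 < (exp a - exp b) * (a - b).
Proof.
  intros Hab. destruct (Rlt_or_le a b) as [H|H].
  - pose proof (exp_increasing a b H). nra.
  - pose proof (exp_increasing b a ltac:(lra)). nra.
Qed.

Lemma exp_sub_mul_sub_nonneg a b : 0 <= (exp a - exp b) * (a - b).
Proof.
  destruct (Req_dec a b) as [->|Hab]; [lra|]. apply Rlt_le, exp_sub_mul_sub_pos, Hab.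
Qed.

(* Σ_i (w2_i - w1_i)((x2 - x1) + i (y2 - y1)) equals (y2 - y1)(ρ2 - ρ1); each
   term is nonnegative, and the terms i = 1, 2 cannot both vanish. *)
Lemma xy_sol_increasing t rho1 x1 y1 rho2 x2 y2 : (2 <= t)%nat ->
  xy_sol t rho1 x1 y1 -> xy_sol t rho2 x2 y2 -> y1 < y2 -> rho1 < rho2.
Proof.
  intros Ht Hs1 Hs2 Hy.
  apply xy_solE in Hs1 as [W1 M1]. apply xy_solE in Hs2 as [W2 M2].
  set (T i := (exp (x2 + INR i * y2) - exp (x1 + INR i * y1)) *
                ((x2 + INR i * y2) - (x1 + INR i * y1)) / d i).
  assert (Hid : sum1t t T = (y2 - y1) * (rho2 - rho1)).
  { rewrite (sum1t_ext t T (fun i => (x2 - x1) * weight x2 y2 i + (-(x2 - x1)) * weight x1 y1 i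
        + ((y2 - y1) * (INR i * weight x2 y2 i) + (-(y2 - y1)) * (INR i * weight x1 y1 i)))).
    - rewrite !sum1t_plus, !sum1t_scal, W1, W2, M1, M2. ring.
    - intros i _. unfold T, weight. field. pose proof (d_pos i); lra. }
  assert (Hpos : forall i, (x2 + INR i * y2) <> (x1 + INR i * y1) -> 0 < T i).
  { intros i Hi. apply Rdiv_lt_0_compat; [apply exp_sub_mul_sub_pos, Hi | apply d_pos]. }
  assert (Hnonneg : forall i, (1 <= i <= t)%nat -> 0 <= T i).
  { intros i _. apply Rdiv_le_0_compat; [apply exp_sub_mul_sub_nonneg | apply d_pos]. }
  assert (Hsum : 0 < sum1t t T).
  { destruct (Req_dec (x2 + INR 1 * y2) (x1 + INR 1 * y1)) as [E|E].
    - apply Rlt_le_trans with (T 2%nat); [|apply sum1t_ge_term; auto; lia].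
      apply Hpos. simpl in *. lra.
    - apply Rlt_le_trans with (T 1%nat); [apply Hpos, E | apply sum1t_ge_term; auto; lia]. }
  nra.
Qed.

Definition partition (t : nat) (y : R) : R := sum1t t (fun i => exp (INR i * y) / d i).

Definition log_norm (t : nat) (y : R) : R := - ln (partition t y).

Definition mean (t : nat) (y : R) : R := sum1t t (fun i => INR i * weight (log_norm t y) y i).

Lemma partition_pos t y : (1 <= t)%nat -> 0 < partition t y.
Proof.
  intros Ht. apply Rlt_le_trans with (exp (INR 1 * y) / d 1).
  - apply Rdiv_lt_0_compat; [apply exp_pos | apply d_pos].
  - apply (sum1t_ge_term t (fun i => exp (INR i * y) / d i)); [|lia].
    intros; apply Rdiv_le_0_compat; [apply Rlt_le, exp_pos | apply d_pos].
Qed.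

Lemma exp_log_norm t y : (1 <= t)%nat -> exp (log_norm t y) * partition t y = 1.
Proof.
  intros Ht. pose proof (partition_pos t y Ht).
  unfold log_norm. rewrite exp_Ropp, exp_ln by lra. field. lra.
Qed.

Lemma sum1t_weight t x y : sum1t t (weight x y) = exp x * partition t y.
Proof.
  unfold partition. rewrite <- sum1t_scal. apply sum1t_ext; intros.
  unfold weight. rewrite exp_plus. unfold Rdiv; ring.
Qed.

Lemma sum1t_mul_weight t x y : sum1t t (fun i => INR i * weight x y i) =
  exp x * sum1t t (fun i => INR i * exp (INR i * y) / d i).
Proof.
  rewrite <- sum1t_scal. apply sum1t_ext; intros.
  unfold weight. rewrite exp_plus. unfold Rdiv; ring.
Qed.

Lemma xy_sol_mean t y : (1 <= t)%nat -> xy_sol t (mean t y) (log_norm t y) y.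
Proof.
  intros Ht. apply xy_solE. split; [|reflexivity].
  rewrite sum1t_weight. apply exp_log_norm, Ht.
Qed.

Lemma xy_sol_mean_eq t rho x y : (1 <= t)%nat -> xy_sol t rho x y -> rho = mean t y.
Proof.
  intros Ht Hs. apply xy_solE in Hs as [Hw <-].
  pose proof (partition_pos t y Ht). pose proof (exp_log_norm t y Ht).
  rewrite sum1t_weight in Hw.
  assert (Hx : x = log_norm t y) by (apply exp_inv, (Rmult_eq_reg_r (partition t y)); lra).
  rewrite Hx. reflexivity.
Qed.

Lemma mean_increasing t u v : (2 <= t)%nat -> u < v -> mean t u < mean t v.
Proof.
  intros Ht Huv.
  apply (xy_sol_increasing t _ (log_norm t u) u _ (log_norm t v) v Ht);
    [apply xy_sol_mean; lia | apply xy_sol_mean; lia | exact Huv].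
Qed.

Definition moment_gap (t : nat) (rho y : R) : R :=
  sum1t t (fun i => (INR i - rho) * exp (INR i * y) / d i).

Lemma moment_gap_eq t rho y : (1 <= t)%nat ->
  moment_gap t rho y = (mean t y - rho) * partition t y.
Proof.
  intros Ht. pose proof (exp_log_norm t y Ht) as E.
  transitivity (sum1t t (fun i => INR i * exp (INR i * y) / d i) + (- rho) * partition t y).
  - unfold moment_gap, partition. rewrite <- sum1t_scal, <- sum1t_plus.
    apply sum1t_ext; intros; unfold Rdiv; ring.
  - unfold mean. rewrite sum1t_mul_weight.
    set (M := sum1t t (fun i => INR i * exp (INR i * y) / d i)).
    rewrite <- (Rmult_1_l M) at 1. rewrite <- E. ring.
Qed.

Lemma moment_gap_continuity t rho : continuity (moment_gap t rho).
Proof.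
  intros y. apply (sum1t_continuity_pt t (fun i y => (INR i - rho) * exp (INR i * y) / d i)).
  intros i. apply continuity_pt_filterlim.
  apply (ex_derive_continuous (fun y => (INR i - rho) * exp (INR i * y) / d i)).
  auto_derive. pose proof (d_pos i). lra.
Qed.

Lemma mul_div_le_bound c C E E' D : 0 <= E <= E' -> c <= C -> 0 <= C -> 1 <= D ->
  c * E / D <= C * E'.
Proof.
  intros HE Hc HC HD.
  assert (HD' : 0 < / D <= 1) by (split; [apply Rinv_0_lt_compat | rewrite <- Rinv_1;
    apply Rinv_le_contravar]; lra).
  unfold Rdiv. destruct (Rle_or_lt c 0).
  - assert (c * E <= 0) by nra. assert (c * E * / D <= 0) by nra.
    assert (0 <= C * E') by nra. lra.
  - assert (0 <= c * E) by nra. assert (c * E * / D <= c * E) by nra.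
    assert (c * E <= C * E) by nra. assert (C * E <= C * E') by nra. lra.
Qed.

(* The term i = 1 dominates as y -> -oo: take e^y = (ρ - 1) / (2 t^2). *)
Lemma moment_gap_neg t rho : (2 <= t)%nat -> 1 < rho -> rho < INR t ->
  exists a, moment_gap t rho a < 0.
Proof.
  intros Ht H1 H2. destruct t as [|m]; [lia|].
  set (T := INR (S m)) in *.
  assert (HT : 2 <= T) by (apply (le_INR 2); lia).
  assert (Hm : INR m <= T) by (apply le_INR; lia).
  set (u := (rho - 1) / (2 * (T * T))).
  assert (Hu : 0 < u) by (apply Rdiv_lt_0_compat; nra).
  assert (Hu1 : ln u <= 0).
  { rewrite <- ln_1. apply ln_le; [exact Hu|].
    apply Rmult_le_reg_r with (2 * (T * T)); [nra|].
    unfold u, Rdiv. rewrite Rmult_assoc, Rinv_l by nra. nra. }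
  exists (ln u). unfold moment_gap. rewrite sum1t_Sl.
  assert (Hs : sum1t m (fun i => (INR (S i) - rho) * exp (INR (S i) * ln u) / d (S i))
               <= sum1t m (fun _ => T * exp (ln u + ln u))).
  { apply sum1t_le. intros i Hi.
    assert (2 <= INR (S i)) by (apply (le_INR 2); lia).
    assert (INR (S i) <= T) by (apply le_INR; lia).
    apply mul_div_le_bound; [| lra | lra | apply d_ge1].
    split; [apply Rlt_le, exp_pos|].
    destruct (Req_dec (INR (S i) * ln u) (ln u + ln u)) as [->|]; [lra|].
    apply Rlt_le, exp_increasing. nra. }
  rewrite sum1t_const, exp_plus, exp_ln in Hs by lra.
  rewrite d_1, Rmult_1_l, exp_ln by lra.
  assert (INR m * (T * (u * u)) <= T * (T * (u * u))) by (apply Rmult_le_compat_r; nra).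
  assert (T * T * u = (rho - 1) / 2) by (unfold u; field; nra).
  simpl (INR 1) in *. nra.
Qed.

(* The term i = t dominates as y -> +oo: take e^y = 2 t^2 d_t / (t - ρ). *)
Lemma moment_gap_pos t rho : (2 <= t)%nat -> 1 < rho -> rho < INR t ->
  exists b, 0 < moment_gap t rho b.
Proof.
  intros Ht H1 H2. destruct t as [|m]; [lia|].
  set (T := INR (S m)) in *.
  assert (HT : 2 <= T) by (apply (le_INR 2); lia).
  assert (Hm : INR m <= T) by (apply le_INR; lia).
  assert (Hm0 : 0 <= INR m) by apply pos_INR.
  set (D := d (S m)). assert (HD : 1 <= D) by apply d_ge1.
  set (v := 2 * (T * T) * D / (T - rho)).
  assert (Hv : 1 <= v).
  { apply Rmult_le_reg_r with (T - rho); [lra|].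
    unfold v, Rdiv. rewrite Rmult_assoc, Rinv_l by lra.
    assert (T <= T * T) by nra. assert (T * T <= T * T * D) by nra. lra. }
  assert (Hb : 0 <= ln v) by (rewrite <- ln_1; apply ln_le; lra).
  exists (ln v). unfold moment_gap. rewrite sum1t_S.
  set (w := exp (INR m * ln v)). assert (Hw : 0 < w) by apply exp_pos.
  assert (Hs : - (INR m * (T * w))
               <= sum1t m (fun i => (INR i - rho) * exp (INR i * ln v) / d i)).
  { replace (- (INR m * (T * w))) with (INR m * - (T * w)) by ring.
    rewrite <- sum1t_const. apply sum1t_le. intros i Hi.
    assert (INR i <= INR m) by (apply le_INR; lia).
    assert (0 <= INR i) by apply pos_INR.
    assert (Hle : (rho - INR i) * exp (INR i * ln v) / d i <= T * w).
    { apply mul_div_le_bound; [split | lra | lra | apply d_ge1].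
      - apply Rlt_le, exp_pos.
      - destruct (Req_dec (INR i * ln v) (INR m * ln v)) as [E|]; unfold w; [rewrite E; lra|].
        apply Rlt_le, exp_increasing. nra. }
    unfold Rdiv in *. lra. }
  fold T D.
  replace (exp (T * ln v)) with (w * v).
  2:{ unfold T, w. rewrite S_INR, Rmult_plus_distr_r, Rmult_1_l, exp_plus, exp_ln by lra.
      reflexivity. }
  replace ((T - rho) * (w * v) / D) with (2 * (T * T) * w) by (unfold v; field; lra).
  assert (INR m * (T * w) <= T * (T * w)) by (apply Rmult_le_compat_r; nra).
  assert (0 < T * (T * w)) by (apply Rmult_lt_0_compat; nra).
  lra.
Qed.

Lemma mean_surjective t rho : (2 <= t)%nat -> 1 < rho -> rho < INR t ->
  exists y, mean t y = rho.
Proof.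
  intros Ht H1 H2. assert (Ht1 : (1 <= t)%nat) by lia.
  destruct (moment_gap_neg t rho Ht H1 H2) as [a Ha].
  destruct (moment_gap_pos t rho Ht H1 H2) as [b Hb].
  pose proof (partition_pos t a Ht1). pose proof (partition_pos t b Ht1).
  assert (Hab : a < b).
  { rewrite moment_gap_eq in Ha, Hb by exact Ht1.
    assert (mean t a < rho) by nra. assert (rho < mean t b) by nra.
    destruct (Rlt_or_le a b) as [|Hba]; [assumption|].
    destruct (Req_dec b a) as [->|]; [lra|].
    pose proof (mean_increasing t b a Ht ltac:(lra)). lra. }
  destruct (IVT (moment_gap t rho) a b (moment_gap_continuity t rho) Hab Ha Hb) as [y [_ Hy]].
  exists y. rewrite moment_gap_eq in Hy by exact Ht1.
  pose proof (partition_pos t y Ht1).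
  apply Rmult_integral in Hy as [Hy|Hy]; lra.
Qed.

Lemma xy_sol_y_t t rho : (2 <= t)%nat -> 1 < rho -> rho < INR t ->
  exists x, xy_sol t rho x (y_t t rho).
Proof.
  intros Ht H1 H2. unfold y_t. apply epsilon_spec.
  destruct (mean_surjective t rho Ht H1 H2) as [y <-].
  exists y, (log_norm t y). apply xy_sol_mean. lia.
Qed.

Lemma mean_y_t t rho : (2 <= t)%nat -> 1 < rho < INR t -> mean t (y_t t rho) = rho.
Proof.
  intros Ht [H1 H2]. destruct (xy_sol_y_t t rho Ht H1 H2) as [x Hs].
  symmetry. apply (xy_sol_mean_eq t rho x); [lia | exact Hs].
Qed.

(** * Differentiability of the entropy minimum *)

Lemma continuity_pt_inverse_increasing (F G : R -> R) (a b r : R) :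
  (forall u v, u < v -> F u < F v) -> (forall s, a < s < b -> F (G s) = s) ->
  a < r < b -> continuity_pt G r.
Proof.
  intros Hinc Hinv Hr eps Heps.
  set (lo := F (G r - eps / 2)). set (hi := F (G r + eps / 2)).
  assert (Hlo : lo < r) by (rewrite <- (Hinv r Hr); apply Hinc; lra).
  assert (Hhi : r < hi) by (rewrite <- (Hinv r Hr) at 1; apply Hinc; lra).
  exists (Rmin (Rmin (r - lo) (hi - r)) (Rmin (r - a) (b - r))).
  split; [repeat apply Rmin_glb_lt; lra|].
  intros s [_ Hs]. simpl in *. unfold R_dist in *. apply Rabs_def2 in Hs.
  pose proof (Rmin_l (Rmin (r - lo) (hi - r)) (Rmin (r - a) (b - r))).
  pose proof (Rmin_r (Rmin (r - lo) (hi - r)) (Rmin (r - a) (b - r))).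
  pose proof (Rmin_l (r - lo) (hi - r)). pose proof (Rmin_r (r - lo) (hi - r)).
  pose proof (Rmin_l (r - a) (b - r)). pose proof (Rmin_r (r - a) (b - r)).
  assert (HGs : F (G s) = s) by (apply Hinv; lra).
  apply Rabs_def1.
  - destruct (Rlt_or_le (G s - G r) eps) as [|Hge]; [assumption|].
    assert (hi < F (G s)) by (apply Hinc; lra). lra.
  - destruct (Rlt_or_le (- eps) (G s - G r)) as [|Hle]; [assumption|].
    assert (F (G s) < lo) by (apply Hinc; lra). lra.
Qed.

(* The difference quotient at r lies between g r and g (r + h). *)
Lemma derivable_pt_lim_continuous_subgradient (f g : R -> R) (a b r : R) :
  a < r < b -> continuity_pt g r ->
  (forall u v, a < u < b -> a < v < b -> f u + g u * (v - u) <= f v) ->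
  derivable_pt_lim f r (g r).
Proof.
  intros Hr Hg Hsub eps Heps.
  destruct (Hg eps Heps) as [delta [Hdelta Hclose]].
  assert (Hpos : 0 < Rmin delta (Rmin (r - a) (b - r))) by (repeat apply Rmin_glb_lt; lra).
  exists (mkposreal _ Hpos). intros h Hh0 Hh. simpl in Hh.
  pose proof (Rmin_l delta (Rmin (r - a) (b - r))). pose proof (Rmin_r delta (Rmin (r - a) (b - r))).
  pose proof (Rmin_l (r - a) (b - r)). pose proof (Rmin_r (r - a) (b - r)).
  assert (Hh' := Rabs_def2 _ _ Hh).
  assert (Hrh : a < r + h < b) by lra.
  assert (Hgh : Rabs (g (r + h) - g r) < eps).
  { apply (Hclose (r + h)). split; [split; [exact I | lra]|].
    simpl. unfold R_dist. replace (r + h - r) with h by ring. lra. }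
  apply Rabs_def2 in Hgh.
  pose proof (Hsub r (r + h) Hr Hrh). pose proof (Hsub (r + h) r Hrh Hr).
  set (q := (f (r + h) - f r) / h - g r).
  assert (Hq : q * h = f (r + h) - f r - g r * h) by (unfold q; field; exact Hh0).
  assert (Hlow : 0 <= q * h) by lra.
  assert (Hup : q * h <= (g (r + h) - g r) * h) by lra.
  apply Rabs_def1; destruct (Rlt_or_le 0 h).
  - assert (q <= g (r + h) - g r) by nra. lra.
  - assert (q <= 0) by nra. lra.
  - assert (0 <= q) by nra. lra.
  - assert (g (r + h) - g r <= q) by nra. lra.
Qed.

(* The infimum of Σ_i p_i log(p_i d_i) over admissible p, read off from L̃0 at k = 1. *)
Definition entropy_min (t : nat) (rho : R) : R := rho * ln rho - rho + 1 - Ltilde0 rho 1 t.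

Lemma entropy_min_xy_sol t rho x y : xy_sol t rho x y -> entropy_min t rho = x + rho * y.
Proof.
  intros Hs. unfold entropy_min. rewrite (Ltilde0_xy_sol t rho 1 x y Hs), Rmult_1_r, ln_1. ring.
Qed.

Lemma entropy_min_subgradient t r s : (2 <= t)%nat -> 1 < r < INR t -> 1 < s < INR t ->
  entropy_min t r + y_t t r * (s - r) <= entropy_min t s.
Proof.
  intros Ht [Hr1 Hr2] [Hs1 Hs2].
  destruct (xy_sol_y_t t r Ht Hr1 Hr2) as [x Hr].
  destruct (xy_sol_y_t t s Ht Hs1 Hs2) as [x' Hs].
  rewrite (entropy_min_xy_sol t r x _ Hr), (entropy_min_xy_sol t s x' _ Hs).
  pose proof (xy_sol_support t r x (y_t t r) s x' (y_t t s) Hr Hs). lra.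
Qed.

Lemma is_derive_entropy_min t r : (2 <= t)%nat -> 1 < r < INR t ->
  is_derive (entropy_min t) r (y_t t r).
Proof.
  intros Ht Hr. apply is_derive_Reals.
  apply (derivable_pt_lim_continuous_subgradient _ _ 1 (INR t)); [exact Hr | |].
  - apply (continuity_pt_inverse_increasing (mean t) (y_t t) 1 (INR t)); [| |exact Hr].
    + intros u v; apply mean_increasing, Ht.
    + intros s Hs; apply mean_y_t; assumption.
  - intros u v Hu Hv. apply entropy_min_subgradient; assumption.
Qed.

Lemma Lhat0_eq t n k : (2 <= t)%nat -> 0 < k -> 1 < n / k < INR t ->
  Lhat0 n k t = n / k * ln n - ln k - n / k + 1 - entropy_min t (n / k).
Proof.
  intros Ht Hk [H1 H2]. destruct (xy_sol_y_t t (n / k) Ht H1 H2) as [x Hs].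
  unfold Lhat0. rewrite (Ltilde0_xy_sol t _ k x _ Hs), (entropy_min_xy_sol t _ x _ Hs).
  replace (n / k * k) with n by (field; lra). ring.
Qed.

Lemma is_derive_Lhat0_comp t (N K : R -> R) z dN dK : (2 <= t)%nat ->
  is_derive N z dN -> is_derive K z dK -> 0 < N z -> 0 < K z -> 1 < N z / K z < INR t ->
  is_derive (fun z' => Lhat0 (N z') (K z') t) z
    ((dN * K z - N z * dK) / K z ^ 2 * (ln (N z) - y_t t (N z / K z) - 1) + dN / K z - dK / K z).
Proof.
  intros Ht HN HK HNz HKz Hr.
  set (ratio z' := N z' / K z').
  assert (Hratio : is_derive ratio z ((dN * K z - N z * dK) / K z ^ 2))
    by (apply is_derive_div; [exact HN | exact HK | lra]).
  apply is_derive_ext_loc with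
    (fun z' => ratio z' * ln (N z') - ln (K z') - ratio z' + 1 - entropy_min t (ratio z')).
  - assert (Hloc_ratio : locally z (fun z' => 1 < ratio z' < INR t)).
    { apply (ex_derive_continuous ratio z (ex_intro _ _ Hratio) (fun s => 1 < s < INR t)).
      apply (open_and _ _ (open_gt 1) (open_lt (INR t))). exact Hr. }
    assert (Hloc_K : locally z (fun z' => 0 < K z')).
    { apply (ex_derive_continuous K z (ex_intro _ _ HK) (fun s => 0 < s)). apply (open_gt 0). exact HKz. }
    generalize (filter_and _ _ Hloc_ratio Hloc_K). apply filter_imp.
    intros z' [Hr' HK']. symmetry. apply Lhat0_eq; assumption.
  - assert (Hphi := is_derive_comp _ _ _ _ _ (is_derive_entropy_min t (ratio z) Ht Hr) Hratio).
    assert (Helem : is_derive (fun z' => ratio z' * ln (N z') - ln (K z') - ratio z' + 1) z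
      ((dN * K z - N z * dK) / K z ^ 2 * (ln (N z) - 1) + dN / K z - dK / K z)).
    { unfold ratio. auto_derive.
      - repeat split; try (eexists; eassumption); lra.
      - replace (Derive (fun x : R => N x) z) with dN by (symmetry; apply is_derive_unique, HN).
        replace (Derive (fun x : R => K x) z) with dK by (symmetry; apply is_derive_unique, HK).
        field. lra. }
    assert (HM := is_derive_minus _ _ z _ _ Helem Hphi).
    eapply is_derive_ext; [intros; reflexivity|].
    replace (_ + dN / K z - dK / K z) with (minus
      ((dN * K z - N z * dK) / K z ^ 2 * (ln (N z) - 1) + dN / K z - dK / K z)
      (scal ((dN * K z - N z * dK) / K z ^ 2) (y_t t (ratio z)))).
    + exact HM.
    + unfold minus, plus, opp, scal; simpl. unfold mult; simpl. unfold ratio. ring.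
Qed.

Theorem lemma35 (t : nat) (n k : R) :
  (1 <= t)%nat -> 0 < n -> 0 < k -> 1 < n / k -> n / k < INR t ->
  is_derive (fun k' => Lhat0 n k' t) k
    (- (n / k ^ 2) * (ln n - y_t t (n / k)) + n / k ^ 2 - 1 / k) /\
  is_derive (fun n' => Lhat0 n' k t) n
    ((ln n - y_t t (n / k)) / k).
Proof.
  intros _ Hn Hk H1 H2.
  assert (Ht : (2 <= t)%nat).
  { destruct t as [|[|t]]; [simpl in H2; lra | simpl in H2; lra | lia]. }
  split.
  - assert (H := is_derive_Lhat0_comp t (fun _ => n) (fun k' => k') k 0 1 Ht
      (is_derive_const n k) (is_derive_id k) Hn Hk (conj H1 H2)).
    replace (- (n / k ^ 2) * (ln n - y_t t (n / k)) + n / k ^ 2 - 1 / k) with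
      ((0 * k - n * 1) / k ^ 2 * (ln n - y_t t (n / k) - 1) + 0 / k - 1 / k) by (field; lra).
    exact H.
  - assert (H := is_derive_Lhat0_comp t (fun n' => n') (fun _ => k) n 1 0 Ht
      (is_derive_id n) (is_derive_const k n) Hn Hk (conj H1 H2)).
    replace ((ln n - y_t t (n / k)) / k) with
      ((1 * k - n * 0) / k ^ 2 * (ln n - y_t t (n / k) - 1) + 1 / k - 0 / k) by (field; lra).
    exact H.
Qed.
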